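(* Let $(G,\alpha)$ be a finite Hom-group and $H\preceq G$. Then the set of left cosets $\{gH: g\in G\}$, where $gH=\{gh:h\in H\}$, is a partition of $G$.
   Context: A Hom-group is a tuple $(G,\mu,1,\alpha)$ where $G$ is a set, $\mu:G\times G\to G$ is a binary operation written $\mu(g,h)=gh$, $1\in G$ is a distinguished element, and $\alpha:G\to G$ is a bijection, such that: (1) Hom-associativity: $\alpha(g)(hk)=(gh)\alpha(k)$ for all $g,h,k\in G$; (2) $\alpha(gk)=\alpha(g)\alpha(k)$ for all $g,k$; (3) Hom-unitality: $g1=1g=\alpha(g)$ for all $g$, and $\alpha(1)=1$; (4) for every $g\in G$ there exists $g^{-1}\in G$ with $gg^{-1}=g^{-1}g=1$ (such an inverse is unique). A Hom-subgroup of $(G,\alpha)$ is a subset $H\subseteq G$ such that $H$, with the restriction of the multiplication of $G$, the element $1$, and the restriction of $\alpha$, is itself a Hom-group (in particular $1\in H$, $H$ is closed under multiplication and inverses, and $\alpha$ restricts to a bijection $H\to H$). We write $H\preceq G$. *)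

From HB Require Import structures.
From mathcomp Require Import all_boot.
Set Implicit Arguments. Unset Strict Implicit. Unset Printing Implicit Defensive.

Record is_hom_group_on (T : finType) (S : {set T})
    (mul : T -> T -> T) (one : T) (alpha : T -> T) : Prop := {
  hg_one : one \in S;
  hg_mul : forall g h, g \in S -> h \in S -> mul g h \in S;
  hg_alpha : forall g, g \in S -> alpha g \in S;
  hg_alpha_inj : forall g h, g \in S -> h \in S -> alpha g = alpha h -> g = h;
  hg_alpha_surj : forall h, h \in S -> exists2 g, g \in S & alpha g = h;
  hg_assoc : forall g h k, g \in S -> h \in S -> k \in S ->
      mul (alpha g) (mul h k) = mul (mul g h) (alpha k);
  hg_alpha_mul : forall g k, g \in S -> k \in S ->
      alpha (mul g k) = mul (alpha g) (alpha k);
  hg_unit : forall g, g \in S -> mul g one = alpha g /\ mul one g = alpha g;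
  hg_alpha_one : alpha one = one;
  hg_inv : forall g, g \in S -> exists2 g', g' \in S & mul g g' = one /\ mul g' g = one
}.

Definition is_hom_group (T : finType) (mul : T -> T -> T) (one : T) (alpha : T -> T) :=
  is_hom_group_on [set: T] mul one alpha.

Definition hom_subgroup (T : finType) (mul : T -> T -> T) (one : T) (alpha : T -> T)
    (H : {set T}) := is_hom_group_on H mul one alpha.

Definition hlcoset (T : finType) (mul : T -> T -> T) (g : T) (H : {set T}) : {set T} :=
  [set mul g h | h in H].

(* Since alpha is bijective, g * h := alpha^-1 (g h) is an ordinary group law on G
   with unit 1: Hom-associativity alpha(g)(hk) = (gh)alpha(k) becomes plain
   associativity after applying alpha^-1 twice.  A Hom-subgroup H is a subgroup
   for this law (finiteness makes closure under products and 1 enough), and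
   gh = alpha(g * h) shows that each Hom-coset gH is the image under alpha of the
   ordinary left coset g * H.  Left cosets of a subgroup partition a group, and
   the bijection alpha carries that partition to the set of Hom-cosets. *)

From HB Require Import structures.
From mathcomp Require Import all_boot all_fingroup.
Set Implicit Arguments. Unset Strict Implicit. Unset Printing Implicit Defensive.
Local Open Scope group_scope.

Lemma lcosets_partition (gT : finGroupType) (G H : {group gT}) :
  H \subset G -> partition (lcosets H G) G.
Proof.
move=> sHG; have defHx x : x \in G -> [set y in G | lcoset H x == lcoset H y] = x *: H.
  move=> Gx; apply/setP=> y; rewrite inE !lcosetE (sameP eqP lcoset_eqP) lcoset_sym.
  by apply/andb_idl=> /lcosetP[h /(subsetP sHG) Gh ->]; rewrite groupM.
have:= preim_partitionP (lcoset H) G; congr (partition _ _); apply/setP=> B.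
apply/imsetP/lcosetsP=> [[x Gx ->] | [x Gx ->]]; exists x; rewrite ?defHx //.
Qed.

Section Untwist.
Variables (T : finType) (mul : T -> T -> T) (one : T) (alpha : T -> T).
Hypothesis homG : is_hom_group mul one alpha.

Lemma hom_group_alpha_inj : injective alpha.
Proof. by move=> g h; apply: (hg_alpha_inj homG); rewrite in_setT. Qed.

Definition untwisted_mul g h := invF hom_group_alpha_inj (mul g h).

Lemma mul_untwisted g h : mul g h = alpha (untwisted_mul g h).
Proof. by rewrite f_invF. Qed.

Lemma untwisted_mulA : associative untwisted_mul.
Proof.
move=> g h k; apply: hom_group_alpha_inj; apply: hom_group_alpha_inj.
rewrite -!mul_untwisted !(hg_alpha_mul homG) ?in_setT // -!mul_untwisted.
by rewrite (hg_assoc homG) ?in_setT.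
Qed.

Lemma untwisted_mul1g : left_id one untwisted_mul.
Proof.
move=> g; apply: hom_group_alpha_inj; rewrite -mul_untwisted.
by have [_ ->] := hg_unit homG (in_setT g).
Qed.

Definition untwisted_inv g := odflt g [pick g' | untwisted_mul g' g == one].

Lemma untwisted_mulVg : left_inverse one untwisted_inv untwisted_mul.
Proof.
move=> g; rewrite /untwisted_inv; case: pickP => [g' /eqP //| noinv] /=.
have [g' _ [_ g'g]] := hg_inv homG (in_setT g).
have := noinv g'; rewrite /untwisted_mul g'g.
by rewrite -[X in invF _ X](hg_alpha_one homG) invF_f eqxx.
Qed.

(* Indexed by the Hom-group axioms, so that the group structure declared below
   is found canonically. *)
Definition untwisted of is_hom_group mul one alpha : Type := T.
Local Notation uT := (untwisted homG).
HB.instance Definition _ := Finite.on uT.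
HB.instance Definition _ :=
  Finite_isGroup.Build uT untwisted_mulA untwisted_mul1g untwisted_mulVg.

Definition untwisted_finGroupType : finGroupType := uT.
Local Notation gT := untwisted_finGroupType.

Lemma imset_alpha_setT : (alpha : gT -> T) @: [set: gT] = [set: T].
Proof.
apply/setP=> x; rewrite in_setT; apply/imsetP.
have [g _ <-] := hg_alpha_surj homG (in_setT x).
by exists g.
Qed.

Lemma untwisted_mulgE (g h : gT) : g * h = untwisted_mul g h.
Proof. by []. Qed.

Variable H : {set T}.
Hypothesis homH : hom_subgroup mul one alpha H.

Definition untwisted_set : {set gT} := [set x : gT | x \in H].

Lemma untwisted_group_set : group_set untwisted_set.
Proof.
apply/group_setP; split=> [|g h]; rewrite !inE; first exact: (hg_one homH).
move=> Hg Hh; rewrite untwisted_mulgE.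
have /(hg_alpha_surj homH)[k Hk] := hg_mul homH Hg Hh.
by rewrite mul_untwisted => /hom_group_alpha_inj <-.
Qed.

Canonical untwisted_group := Group untwisted_group_set.

Lemma hlcoset_untwisted (g : gT) :
  hlcoset mul g H = (alpha : gT -> T) @: (g *: untwisted_group).
Proof.
apply/setP=> x; apply/imsetP/imsetP=> [[h Hh ->] | [y /lcosetP[h Hh ->] ->]].
  exists (g * h); last by rewrite mul_untwisted.
  by apply/lcosetP; exists h; rewrite ?inE.
by rewrite inE in Hh; exists h; rewrite // untwisted_mulgE mul_untwisted.
Qed.

Lemma hlcosets_untwisted :
  [set hlcoset mul g H | g in [set: T]] =
  [set (alpha : gT -> T) @: (B : {set gT}) | B in lcosets untwisted_group [set: gT]].
Proof.
apply/setP=> B; apply/imsetP/imsetP=> [[g _ ->] | [_ /lcosetsP[g _ ->] ->]].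
  exists ((g : gT) *: untwisted_group); last exact: hlcoset_untwisted.
  by apply/lcosetsP; exists g; rewrite ?in_setT.
by exists g; rewrite ?hlcoset_untwisted.
Qed.

End Untwist.

Theorem mainTheorem8 (T : finType) (mul : T -> T -> T) (one : T) (alpha : T -> T)
    (HG : is_hom_group mul one alpha) (H : {set T}) (HH : hom_subgroup mul one alpha H) :
  partition [set hlcoset mul g H | g in [set: T]] [set: T].
Proof.
rewrite (hlcosets_untwisted HG HH) -(imset_alpha_setT HG) imset_partition.
  exact: lcosets_partition (subsetT _).
exact: (hom_group_alpha_inj HG).
Qed.
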